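(* Let $G=(V,E)$ be a finite simple undirected graph, let $0<p\le 1$, let $T\subseteq V$ be a nonempty set maximizing $f_p(S)$ over all $S\subseteq V$, and let $v\in T$ be a vertex with $d_v(T)=\min_{u\in T}d_u(T)$. Then $\Delta_v(T)\le 2\,d_v(T)^p$.
   Context: For $v\in V$, $N(v)=\{u\in V:(u,v)\in E\}$ (so $v\notin N(v)$). For $S\subseteq V$ and $v\in V$, $d_v(S)=|N(v)\cap S|$. For $p>0$ and nonempty $S\subseteq V$, $f_p(S)=\frac{1}{|S|}\sum_{v\in S}d_v(S)^p$ (with the convention $0^p=0$), and $f_p(\emptyset)=0$. For $S\subseteq V$ and $v\in S$, $\Delta_v(S)=d_v(S)^p+\sum_{u\in N(v)\cap S}\big(d_u(S)^p-(d_u(S)-1)^p\big)$. *)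

From HB Require Import structures.
From mathcomp Require Import all_boot all_order all_algebra.
From mathcomp Require Import all_classical all_reals all_analysis.
Set Implicit Arguments. Unset Strict Implicit. Unset Printing Implicit Defensive.
Import Order.TTheory GRing.Theory Num.Theory.
Local Open Scope ring_scope.

Definition simple_graph (V : finType) (e : rel V) : Prop :=
  symmetric e /\ irreflexive e.

Definition nbhd (V : finType) (e : rel V) (v : V) : {set V} := [set u | e u v].

Definition deg_in (V : finType) (e : rel V) (S : {set V}) (v : V) : nat :=
  #|nbhd e v :&: S|.

(* f_p(S) = (1/|S|) sum_{v in S} d_v(S)^p, f_p(empty) = 0.
   powR satisfies 0 `^ p = 0 for p <> 0, matching the convention 0^p = 0. *)
Definition fp (R : realType) (V : finType) (e : rel V) (p : R) (S : {set V}) : R :=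
  if S == finset.set0 then 0
  else (\sum_(v in S) ((deg_in e S v)%:R `^ p)) / (#|S|%:R).

Definition Delta (R : realType) (V : finType) (e : rel V) (p : R) (S : {set V}) (v : V) : R :=
  (deg_in e S v)%:R `^ p +
  \sum_(u in nbhd e v :&: S)
     ((deg_in e S u)%:R `^ p - ((deg_in e S u)%:R - 1) `^ p).

(* For 0 < p <= 1 the map t |-> t^p is concave, so each increment
   d_u^p - (d_u - 1)^p is at most d_u^p / d_u, and t^p / t = t^(p-1) is
   nonincreasing, so for a vertex of minimum degree d in T every term of the
   sum in Delta_v(T) is at most d^p / d.  There are d terms, so the sum is at
   most d^p. *)
From HB Require Import structures.
From mathcomp Require Import all_boot all_order all_algebra.
From mathcomp Require Import all_classical all_reals all_analysis.
From mathcomp Require Import ring lra.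
Import Order.TTheory GRing.Theory Num.Theory.
Local Open Scope ring_scope.

Section ConcavePowers.
Variables (R : realType) (p : R).
Implicit Types (a d x : R).
Hypotheses (p_gt0 : 0 < p) (p_le1 : p <= 1).

Lemma ge0_ger1_powR a : 0 <= a <= 1 -> a <= a `^ p.
Proof.
move=> /andP[a_ge0 a_le1].
have [->|a_neq0] := eqVneq a 0; first exact: powR_ge0.
by apply: ger1_powR => //; rewrite a_le1 andbT lt_neqAle eq_sym a_neq0.
Qed.

(* Write (x - 1)^p = x^p ((x - 1) / x)^p and use r <= r^p for r in [0, 1]. *)
Lemma powR_sub1_le {x} : 1 <= x -> x `^ p - (x - 1) `^ p <= x `^ p / x.
Proof.
move=> x_ge1; have x_gt0 : 0 < x by apply: lt_le_trans x_ge1.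
have r01 : 0 <= (x - 1) / x <= 1.
  apply/andP; split; first by rewrite divr_ge0 ?subr_ge0 // ltW.
  by rewrite ler_pdivrMr // mul1r lerBlDr lerDl.
have -> : x - 1 = x * ((x - 1) / x) by rewrite mulrC divfK ?gt_eqF.
rewrite powRM; [| exact: ltW | by case/andP: r01].
have : x `^ p * ((x - 1) / x) <= x `^ p * ((x - 1) / x) `^ p.
  by apply: ler_wpM2l; [exact: powR_ge0 | exact: ge0_ger1_powR].
suff -> : x `^ p * ((x - 1) / x) = x `^ p - x `^ p / x by lra.
by field; rewrite gt_eqF.
Qed.

Lemma powR_divr_nonincr d x : 0 < d -> d <= x -> x `^ p / x <= d `^ p / d.
Proof.
move=> d_gt0 d_le_x.
have q_ge1 : 1 <= x / d by rewrite ler_pdivlMr // mul1r.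
have q_gt0 : 0 < x / d by apply: lt_le_trans q_ge1.
have -> : x = d * (x / d) by rewrite mulrC divfK ?gt_eqF.
rewrite powRM ?(ltW d_gt0) ?(ltW q_gt0) // invfM mulrACA -[leRHS]mulr1.
apply: ler_wpM2l; first by rewrite divr_ge0 ?powR_ge0 // ltW.
by rewrite ler_pdivrMr // mul1r; exact: ler1_powR.
Qed.

Lemma powR_sub1_le_min d x :
  1 <= d -> d <= x -> x `^ p - (x - 1) `^ p <= d `^ p / d.
Proof.
move=> d_ge1 d_le_x; apply: le_trans (powR_sub1_le (le_trans d_ge1 d_le_x)) _.
by apply: powR_divr_nonincr => //; apply: lt_le_trans d_ge1.
Qed.

End ConcavePowers.

Lemma Delta_le_min_deg (R : realType) (V : finType) (e : rel V) (p : R)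
    (T : {set V}) (v : V) :
  0 < p -> p <= 1 ->
  (forall u, u \in T -> (deg_in e T v <= deg_in e T u)%N) ->
  Delta e p T v <= 2 * (deg_in e T v)%:R `^ p.
Proof.
move=> p_gt0 p_le1 v_min; rewrite /Delta mulr_natl mulr2n lerD2l.
set d := deg_in e T v; set c := (d%:R : R) `^ p / d%:R.
have [d0|d_gt0] := posnP d.
  have -> : nbhd e v :&: T = finset.set0.
    by apply/eqP; rewrite -cards_eq0; apply/eqP.
  by rewrite big_set0 d0 powR0 // gt_eqF.
have term_le u : u \in nbhd e v :&: T ->
    (deg_in e T u)%:R `^ p - ((deg_in e T u)%:R - 1) `^ p <= c.
  rewrite inE => /andP[_ uT].
  by apply: powR_sub1_le_min; rewrite ?ler1n ?ler_nat ?v_min.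
apply: le_trans (ler_sum _ term_le) _.
rewrite sumr_const -/(deg_in e T v) -/d -(mulr_natr c).
have dR_neq0 : (d%:R : R) != 0 by rewrite pnatr_eq0 -lt0n.
by rewrite /c divfK.
Qed.

(* Only the minimality of d_v(T) is used. *)
Theorem lemma3 (R : realType) (V : finType) (e : rel V) (p : R) (T : {set V}) (v : V) :
  simple_graph e ->
  0 < p -> p <= 1 ->
  T != finset.set0 ->
  (forall S : {set V}, fp e p S <= fp e p T) ->
  v \in T ->
  (forall u, u \in T -> (deg_in e T v <= deg_in e T u)%N) ->
  Delta e p T v <= 2 * (deg_in e T v)%:R `^ p.
Proof. by move=> _ p_gt0 p_le1 _ _ _; exact: Delta_le_min_deg. Qed.
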